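(* Let $X\subseteq\mathscr{A}^\infty$ be a shift space and suppose there is a sequence $(X_n)_{n=1}^\infty$ of shift spaces over $\mathscr{A}$, each with the $\bar d$-shadowing property, such that $X\subseteq X_n$ for every $n$ and $\bar d^H(X,X_n)\to0$ as $n\to\infty$. Then $X$ has the $\bar d$-shadowing property.
   Context: Shift spaces are nonempty closed shift-invariant subsets of $\mathscr{A}^\infty=\mathscr{A}^{\mathbb N_0}$, $\mathscr{A}$ finite; $\mathcal L(X)$ is the set of finite words appearing in $X$. $\bar d(x,y)=\limsup_{n\to\infty}\frac1n|\{0\le j<n:x_j\ne y_j\}|$ and $\bar d^H$ is its Hausdorff distance on nonempty subsets: $\bar d^H(A,B)=\max\{\sup_{a\in A}\inf_{b\in B}\bar d(a,b),\sup_{b\in B}\inf_{a\in A}\bar d(a,b)\}$. $X$ has the $\bar d$-shadowing property if for every $\varepsilon>0$ there is $N$ such that for every sequence $(w^{(j)})_{j\ge1}$ in $\mathcal L(X)$ with $|w^{(j)}|\ge N$ there is $x'\in X$ with $\bar d(w^{(1)}w^{(2)}\cdots,x')<\varepsilon$. *)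

From HB Require Import structures.
From mathcomp Require Import all_boot all_order all_algebra.
From mathcomp Require Import all_classical all_reals all_analysis.
Set Implicit Arguments. Unset Strict Implicit. Unset Printing Implicit Defensive.
Import Order.TTheory GRing.Theory Num.Theory.
Local Open Scope classical_set_scope.
Local Open Scope ring_scope.

Section ShiftDefs.
Variable A : finType.

(* Closedness of X in the product (Cantor) topology of A^N, A discrete:
   x belongs to X whenever every finite prefix of x is a prefix of some point of X. *)
Definition seq_closed (X : set (nat -> A)) : Prop :=
  forall x : nat -> A,
    (forall n, exists2 y, X y & forall i, (i < n)%N -> y i = x i) -> X x.

Definition shift (x : nat -> A) : nat -> A := fun i => x i.+1.

Definition shift_space (X : set (nat -> A)) : Prop :=
  X !=set0 /\ seq_closed X /\ (forall x, X x -> X (shift x)).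

Definition lang (X : set (nat -> A)) : set (seq A) :=
  [set w | exists2 x, X x & exists k, forall i, (i < size w)%N -> x (k + i)%N = nth (x (k + i)%N) w i].

(* The infinite concatenation w 0 ++ w 1 ++ ... ; as an option-valued sequence
   (None only if the concatenation is finite / fuel runs out, which cannot happen
   when all words are nonempty). *)
Fixpoint cat_go (w : nat -> seq A) (fuel j i : nat) : option A :=
  match fuel with
  | 0 => None
  | fuel'.+1 =>
    match w j with
    | [::] => cat_go w fuel' j.+1 i
    | a :: _ => if (i < size (w j))%N then Some (nth a (w j) i)
                else cat_go w fuel' j.+1 (i - size (w j))
    end
  end.

Definition cat_seq (w : nat -> seq A) : nat -> option A :=
  fun i => cat_go w i.+1 0 i.
End ShiftDefs.

Section Dbar.
Variable R : realType.
Local Open Scope ereal_scope.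

Definition ndiff (T : eqType) (x y : nat -> T) (n : nat) : nat :=
  count (fun j => x j != y j) (iota 0 n).

Definition dbar (T : eqType) (x y : nat -> T) : \bar R :=
  limn_esup (fun n => (((ndiff x y n)%:R / n%:R : R))%:E).

Definition dH (T : eqType) (P Q : set (nat -> T)) : \bar R :=
  maxe (ereal_sup [set ereal_inf [set dbar a b | b in Q] | a in P])
       (ereal_sup [set ereal_inf [set dbar a b | a in P] | b in Q]).

Definition dbar_shadowing (A : finType) (X : set (nat -> A)) : Prop :=
  forall eps : R, (0 < eps)%R ->
    exists2 N : nat, (0 < N)%N &
      forall w : nat -> seq A,
        (forall j, lang X (w j) /\ (N <= size (w j))%N) ->
        exists2 x', X x' & dbar (cat_seq w) (fun i => Some (x' i)) < eps%:E.
End Dbar.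

From HB Require Import structures.
From mathcomp Require Import all_boot all_order all_algebra.
From mathcomp Require Import all_classical all_reals all_analysis.
From mathcomp Require Import lra.
Import Order.TTheory GRing.Theory Num.Theory.
Local Open Scope classical_set_scope.
Local Open Scope ring_scope.

(* Fix eps > 0 and split it as eps/3 + eps/3 < eps.  Choose n with
   dH(X, X_n) < eps/3 and let N be the shadowing length of X_n at precision eps/3.
   A sequence of words of L(X) of length >= N is also a sequence of words of
   L(X_n) (as X is contained in X_n), so its concatenation is eps/3-shadowed by a
   point y of X_n; by the Hausdorff bound some x in X has dbar(x, y) < eps/3, and
   the triangle inequality for dbar shows that x shadows the concatenation with
   error at most 2eps/3 < eps. *)

Lemma ndiff_triangle (T : eqType) (x y z : nat -> T) (n : nat) :
  (ndiff x z n <= ndiff x y n + ndiff y z n)%N.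
Proof.
rewrite /ndiff; elim: (iota 0 n) => //= a s IH.
have Ha : ((x a != z a) <= (x a != y a) + (y a != z a))%N.
  case: (eqVneq (x a) (y a)) => [->|]; first by rewrite leq_addl.
  by case: (x a != z a).
by rewrite addnACA; exact: leq_add.
Qed.

(* Triangle inequality for dbar, in the form used for shadowing estimates:
   strict bounds on two legs give a weak bound on the third (dbar is a limsup). *)
Lemma dbar_triangle {R : realType} {T : eqType} {u v w : nat -> T} {e1 e2 : R} :
  (dbar R u v < e1%:E -> dbar R v w < e2%:E -> dbar R u w <= (e1 + e2)%:E)%E.
Proof.
rewrite /dbar /limn_esup /limf_esup.
move=> /ereal_inf_lt [_ [V1 V1oo <-] sup1] /ereal_inf_lt [_ [V2 V2oo <-] sup2].
apply: ge_ereal_inf.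
exists (ereal_sup ((fun n => (((ndiff u w n)%:R / n%:R : R))%:E) @` (V1 `&` V2))).
  by exists (V1 `&` V2) => //; apply: filterI.
apply: ge_ereal_sup => _ [n [Vn1 Vn2] <-].
have uv : ((ndiff u v n)%:R / n%:R <= e1).
  rewrite -lee_fin; apply: le_trans (ltW sup1).
  by apply: ereal_sup_ubound; exists n.
have vw : ((ndiff v w n)%:R / n%:R <= e2).
  rewrite -lee_fin; apply: le_trans (ltW sup2).
  by apply: ereal_sup_ubound; exists n.
rewrite lee_fin; apply: le_trans (lerD uv vw).
rewrite -mulrDl -natrD; apply: ler_wpM2r; first by rewrite invr_ge0.
by rewrite ler_nat; exact: ndiff_triangle.
Qed.

(* dbar is symmetric; the Hausdorff bound measures the shadowing point against
   the approximating point in the opposite order. *)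
Lemma dbar_sym (R : realType) (T : eqType) (u v : nat -> T) :
  dbar R u v = dbar R v u.
Proof.
rewrite /dbar /ndiff; congr limn_esup; apply: funext => n.
by congr ((_%:R / _)%:E); apply: eq_count => j; rewrite eq_sym.
Qed.

(* dbar only sees where two sequences differ, so an injective relabelling of the
   alphabet preserves it; needed to compare points of X with the option-valued
   concatenation [cat_seq]. *)
Lemma dbar_inj_map {R : realType} {T U : eqType} {f : T -> U} {u v : nat -> T} :
  injective f -> dbar R (f \o u) (f \o v) = dbar R u v.
Proof.
move=> f_inj; rewrite /dbar /ndiff; congr limn_esup; apply: funext => n.
by congr ((_%:R / _)%:E); apply: eq_count => j; rewrite /= inj_eq.
Qed.

Lemma lang_mono {A : finType} {X Y : set (nat -> A)} :
  X `<=` Y -> lang X `<=` lang Y.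
Proof. by move=> XY w [x Xx occ]; exists x => //; apply: XY. Qed.

Lemma dH_approx {R : realType} {T : eqType} {P Q : set (nat -> T)} {d : R} {y} :
  (dH R P Q < d%:E)%E -> Q y -> exists2 x, P x & (dbar R x y < d%:E)%E.
Proof.
move=> PQd Qy.
have : (ereal_inf [set dbar R a y | a in P] < d%:E)%E.
  apply: le_lt_trans PQd; rewrite /dH le_max; apply/orP; right.
  by apply: ereal_sup_ubound; exists y.
by move=> /ereal_inf_lt [_ [x Px <-] xy]; exists x.
Qed.

Definition shadows (R : realType) (A : finType) (X : set (nat -> A))
    (eps : R) (N : nat) : Prop :=
  forall w : nat -> seq A,
    (forall j, lang X (w j) /\ (N <= size (w j))%N) ->
    exists2 x', X x' & (dbar R (cat_seq w) (fun i => Some (x' i)) < eps%:E)%E.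

Lemma shadows_of_close_superset {R : realType} {A : finType}
    {X Y : set (nat -> A)} {e d eps : R} {N : nat} :
  X `<=` Y -> (dH R X Y < d%:E)%E -> e + d < eps ->
  shadows R A Y e N -> shadows R A X eps N.
Proof.
move=> XY XYd ed_eps shY w wX.
have [y Yy wy] : exists2 y, Y y &
    (dbar R (cat_seq w) (fun i => Some (y i)) < e%:E)%E.
  by apply: shY => j; have [/(lang_mono XY) wY size_w] := wX j.
have [x Xx xy] := dH_approx XYd Yy.
have yx : (dbar R (fun i => Some (y i)) (fun i => Some (x i)) < d%:E)%E.
  by rewrite (dbar_inj_map (@Some_inj _)) dbar_sym.
exists x => //; apply: le_lt_trans (dbar_triangle wy yx) _.
by rewrite lte_fin.
Qed.

Theorem mainTheorem5 (R : realType) (A : finType)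
    (X : set (nat -> A)) (Xs : nat -> set (nat -> A)) :
  shift_space X ->
  (forall n, shift_space (Xs n)) ->
  (forall n, dbar_shadowing R (Xs n)) ->
  (forall n, X `<=` Xs n) ->
  (dH R X (Xs n) @[n --> \oo] --> 0%E) ->
  dbar_shadowing R X.
Proof.
move=> _ _ shadXs sub dH_cvg eps eps_gt0.
have eps3_gt0 : 0 < eps / 3 by rewrite divr_gt0.
have [n close] : exists n, (dH R X (Xs n) < (eps / 3)%:E)%E.
  have /dH_cvg [n0 _ tail] : nbhs 0%E [set y : \bar R | (y < (eps / 3)%:E)%E].
    by apply: open_ereal_lt'; rewrite lte_fin.
  by exists n0; apply: (tail n0 (leqnn n0)).
have [N N_gt0 shN] := shadXs n _ eps3_gt0.
have split_eps : eps / 3 + eps / 3 < eps by lra.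
by exists N => //; exact: (shadows_of_close_superset (sub n) close split_eps shN).
Qed.
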